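(* Let $X$ be a compact Hausdorff space, $\mathcal C=C(X)$ the real continuous functions on $X$ with the supremum norm, $\alpha\colon X\to X$ continuous, $\delta f=f\circ\alpha$, and $A\colon\mathcal C\to\mathcal C$ a transfer operator for $(\mathcal C,\delta)$. Let $\lambda(\varphi)=\lim_{n\to\infty}\frac1n\ln\|A_\varphi^n\mathbf 1\|$ where $A_\varphi f=A(e^\varphi f)$. Then for every linear functional $\mu$ on $\mathcal C$ that does not belong to $M_\delta(\mathcal C)$, \[ \inf_{\varphi\in\mathcal C}\bigl(\lambda(\varphi)-\mu[\varphi]\bigr)=-\infty. \]
   Context: A transfer operator for $(\mathcal C,\delta)$ is a positive linear operator $A\colon\mathcal C\to\mathcal C$ with $A((\delta f)g)=f\,Ag$ for all $f,g\in\mathcal C$. $\mathbf 1$ is the constant function $1$. $M_\delta(\mathcal C)$ is the set of positive linear functionals $\mu$ on $\mathcal C$ with $\mu[\mathbf 1]=1$ and $\mu[\delta f]=\mu[f]$ for all $f\in\mathcal C$. *)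

From HB Require Import structures.
From mathcomp Require Import all_boot all_order all_algebra.
From mathcomp Require Import all_classical all_reals all_analysis.
Set Implicit Arguments. Unset Strict Implicit. Unset Printing Implicit Defensive.
Import Order.TTheory GRing.Theory Num.Theory.
Import numFieldNormedType.Exports.
Local Open Scope classical_set_scope.
Local Open Scope ring_scope.

(* C(X) is represented inside X -> R by the predicate [continuous]. *)

Definition sup_norm (R : realType) (X : topologicalType) (f : X -> R) : R :=
  sup (range (fun x => `|f x|)).

Definition lin_on_C (R : realType) (X : topologicalType) (A : (X -> R) -> (X -> R)) :=
  (forall f : X -> R, continuous f -> continuous (A f)) /\
  (forall (a : R) (f g : X -> R), continuous f -> continuous g ->
      A (fun x => a * f x + g x) = (fun x => a * A f x + A g x)).

Definition transfer_operator (R : realType) (X : topologicalType)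
    (alpha : X -> X) (A : (X -> R) -> (X -> R)) :=
  lin_on_C A /\
  (forall f : X -> R, continuous f -> (forall x, 0 <= f x) -> forall x, 0 <= A f x) /\
  (forall f g : X -> R, continuous f -> continuous g ->
      A (fun x => f (alpha x) * g x) = (fun x => f x * A g x)).

Definition lin_functional (R : realType) (X : topologicalType) (mu : (X -> R) -> R) :=
  forall (a : R) (f g : X -> R), continuous f -> continuous g ->
    mu (fun x => a * f x + g x) = a * mu f + mu g.

Definition in_M_delta (R : realType) (X : topologicalType) (alpha : X -> X)
    (mu : (X -> R) -> R) :=
  [/\ lin_functional mu,
      (forall f : X -> R, continuous f -> (forall x, 0 <= f x) -> 0 <= mu f),
      mu (fun _ => 1) = 1 &
      (forall f : X -> R, continuous f -> mu (fun x => f (alpha x)) = mu f)].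

Definition Aphi_iter (R : realType) (X : topologicalType) (A : (X -> R) -> (X -> R))
    (phi : X -> R) (n : nat) : X -> R :=
  iter n (fun f => A (fun x => expR (phi x) * f x)) (fun _ => 1).

Definition lam_seq (R : realType) (X : topologicalType) (A : (X -> R) -> (X -> R))
    (phi : X -> R) (n : nat) : \bar R :=
  let N := sup_norm (Aphi_iter A phi n) in
  if N == 0 then -oo%E else (ln N / n%:R)%:E.

Definition lam (R : realType) (X : topologicalType) (A : (X -> R) -> (X -> R))
    (phi : X -> R) : \bar R :=
  lim (lam_seq A phi n @[n --> \oo]).

From HB Require Import structures.
From mathcomp Require Import all_boot all_order all_algebra.
From mathcomp Require Import all_classical all_reals all_analysis.
From mathcomp Require Import ring lra.
Set Implicit Arguments. Unset Strict Implicit. Unset Printing Implicit Defensive.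
Import Order.TTheory GRing.Theory Num.Theory.
Import numFieldNormedType.Exports.
Local Open Scope classical_set_scope.
Local Open Scope ring_scope.

(* Positivity of A_phi makes n |-> ||A_phi^n 1|| submultiplicative, so by
   Fekete's lemma lambda(phi) is a genuine limit, and comparing A_phi^n 1 with
   iterates of A on constants bounds it: lambda(phi) <= max phi + ln ||A 1||.
   For a coboundary psi = g o alpha - g the transfer identity gives
   A_psi^n 1 = e^g A^n e^(-g), hence lambda(psi) <= ln ||A 1||.
   If mu is not in M_delta, one of its three defining properties fails, and
   each failure yields a family of potentials along which lambda stays bounded
   while mu tends to +oo: phi = -t f with f >= 0 and mu f < 0 if mu is not
   positive, constants if mu 1 <> 1, coboundaries t (f o alpha - f) if mu is
   not delta-invariant. *)

Section fekete.
Variables (R : realType) (u : nat -> R).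
Hypothesis u_sub : forall n k, u (n + k)%N <= u n + u k.

Lemma subadditive_mulnD q m r : u (q * m + r)%N <= u m *+ q + u r.
Proof.
elim: q => [|q IH]; first by rewrite mul0n add0n mulr0n add0r.
by rewrite mulSn -addnA (le_trans (u_sub _ _)) // mulrS -addrA lerD2l.
Qed.

Lemma subadditive_rate_eventually_le m e : (0 < m)%N -> 0 < e ->
  exists N, forall n, (N <= n)%N -> u n / n%:R <= u m / m%:R + e.
Proof.
move=> m_gt0 e_gt0.
have mR_gt0 : 0 < m%:R :> R by rewrite ltr0n.
set D := `|u m| + \sum_(r < m) `|u r|.
have u_le_D r : (r < m)%N -> `|u m| + u r <= D.
  move=> rm; rewrite lerD2l (bigD1 (Ordinal rm)) //= ler_wpDr ?sumr_ge0 //.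
  exact: ler_norm.
exists (Num.trunc (D / e)).+1 => n Nn.
have nR_gt0 : 0 < n%:R :> R by rewrite ltr0n (leq_trans _ Nn).
(* [n = q m + r] with [r < m] gives [u n <= q u m + u r], and
   [q u m = (n / m) u m - (r / m) u m] with [0 <= r / m <= 1]. *)
have n_eq := divn_eq n m.
pose s := (n %% m)%:R / m%:R :> R.
have s_ge0 : 0 <= s by rewrite divr_ge0.
have s_le1 : s <= 1 by rewrite ler_pdivrMr // mul1r ler_nat ltnW // ltn_pmod.
have um_s_ge : - `|u m| <= u m * s.
  have : `|u m * s| <= `|u m| by rewrite normrM (ger0_norm s_ge0) ler_piMr.
  by have := ler_norm (- (u m * s)); rewrite normrN; lra.
have qum_eq : u m *+ (n %/ m) = u m / m%:R * n%:R - u m * s.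
  by rewrite {2}n_eq natrD natrM /s; field; rewrite gt_eqF.
have un_le : u n <= u m / m%:R * n%:R + D.
  rewrite {1}n_eq (le_trans (subadditive_mulnD _ _ _)) // qum_eq.
  by have := u_le_D _ (ltn_pmod n m_gt0); lra.
have D_le : D <= e * n%:R.
  rewrite mulrC -ler_pdivrMr //; apply/ltW/(lt_le_trans (truncnS_gt _)).
  by rewrite ler_nat.
by rewrite ler_pdivrMr // mulrDl; lra.
Qed.

Lemma subadditive_rate_cvg : cvg ((u n / n%:R)%:E @[n --> \oo]).
Proof.
set t := fun n => (u n.+1 / n.+1%:R)%:E.
apply/cvg_ex; exists (ereal_inf (range t)); rewrite -cvg_shiftS.
apply: limn_esup_le_cvg; last by move=> n; apply: ereal_inf_lbound; exists n.
apply: le_ereal_inf_tmp => _ [m _ <-]; apply/lee_addgt0Pr => e e_gt0.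
have [N HN] := subadditive_rate_eventually_le (ltn0Sn m) e_gt0.
rewrite limn_esup_lim (cvg_lim _ (@cvg_esups_inf _ _)) //.
apply: (le_trans (ereal_inf_lbound _)); first by exists N.
apply: ub_ereal_sup => _ [n /= Nn <-].
by rewrite lee_fin (HN _ (leqW Nn)).
Qed.

End fekete.

Definition log_rate (R : realType) (a : nat -> R) (n : nat) : \bar R :=
  if a n == 0 then -oo%E else (ln (a n) / n%:R)%:E.

Lemma submultiplicative_log_rate_cvg (R : realType) (a : nat -> R) :
  (forall n, 0 <= a n) -> (forall n k, a (n + k)%N <= a n * a k) ->
  cvg (log_rate a n @[n --> \oo]).
Proof.
move=> a_ge0 a_submul.
have [[k ak0]|a_neq0] := pselect (exists k, a k = 0).
  apply/cvg_ex; exists -oo%E; apply: cvg_near_cst; exists k => // n /= kn.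
  have an_le0 : a n <= 0.
    by rewrite -(subnKC kn) (le_trans (a_submul _ _)) // ak0 mul0r.
  by rewrite /log_rate (_ : a n = 0) ?eqxx //; apply/le_anti; rewrite an_le0 a_ge0.
have a_gt0 n : 0 < a n.
  by rewrite lt0r a_ge0 andbT; apply/eqP => an0; apply: a_neq0; exists n.
have -> : log_rate a = fun n => (ln (a n) / n%:R)%:E.
  by apply/funext => n; rewrite /log_rate gt_eqF.
apply: subadditive_rate_cvg => n k.
by rewrite -lnM ?posrE // ler_ln ?posrE ?mulr_gt0.
Qed.

Lemma log_rate_lim_le (R : realType) (a : nat -> R) (E Q : R) :
  cvg (log_rate a n @[n --> \oo]) -> 0 < E -> 0 < Q ->
  (forall n, 0 <= a n <= E * Q ^+ n) ->
  (lim (log_rate a n @[n --> \oo]) <= (ln Q)%:E)%E.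
Proof.
move=> a_cvg E_gt0 Q_gt0 a_bnd; apply/lee_addgt0Pr => e e_gt0.
apply: lime_le => //; exists (Num.trunc (`|ln E| / e)).+1 => // n /= Nn.
rewrite /log_rate; case: ifPn => [_|an_neq0]; first exact: leNye.
have n_gt0 : 0 < n%:R :> R by rewrite ltr0n (leq_trans _ Nn).
have [an_ge0 an_le] := andP (a_bnd n).
have : ln (a n) <= ln E + n%:R * ln Q.
  rewrite mulr_natl -lnXn // -lnM ?posrE ?exprn_gt0 //.
  by rewrite ler_ln ?posrE ?mulr_gt0 ?exprn_gt0 // lt0r an_neq0.
have lnE_le : `|ln E| <= e * n%:R.
  rewrite mulrC -ler_pdivrMr //; apply/ltW/(lt_le_trans (truncnS_gt _)).
  by rewrite ler_nat.
have := ler_norm (ln E).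
rewrite lee_fin ler_pdivrMr // mulrDl; lra.
Qed.

Section positive_operator.
Variables (R : realType) (X : topologicalType).
Implicit Types (f g h : X -> R) (B : (X -> R) -> (X -> R)).

Lemma continuous_scaleD (a : R) f g :
  continuous f -> continuous g -> continuous (fun x => a * f x + g x).
Proof.
move=> cf cg x; apply: (@continuousD _ _ _ (fun x => a * f x) g); last exact: cg.
by apply: (@continuousM _ _ (fun=> a) f); [exact: cst_continuous|exact: cf].
Qed.

Lemma continuous_mul f g :
  continuous f -> continuous g -> continuous (fun x => f x * g x).
Proof. by move=> cf cg x; apply: (@continuousM _ _ f g); [exact: cf|exact: cg]. Qed.

Lemma continuous_expR_comp f : continuous f -> continuous (fun x => expR (f x)).
Proof.
by move=> cf x; apply: (@continuous_comp _ _ _ f expR); [exact: cf|exact: continuous_expR].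
Qed.

Definition positive_operator B :=
  [/\ forall f, continuous f -> continuous (B f),
      forall (a : R) f g, continuous f -> continuous g ->
        B (fun x => a * f x + g x) = (fun x => a * B f x + B g x) &
      forall f, continuous f -> (forall x, 0 <= f x) -> forall x, 0 <= B f x].

Section properties.
Variable B : (X -> R) -> (X -> R).
Hypothesis B_pos : positive_operator B.

Lemma positive_operatorZ (a : R) f :
  continuous f -> B (fun x => a * f x) = (fun x => a * B f x).
Proof.
case: B_pos => _ B_lin _ cf.
have c0 : continuous (fun _ : X => 0 : R) by exact: cst_continuous.
have B0 : B (fun _ => 0) = (fun _ => 0).
  have := B_lin (-1) _ _ c0 c0; under eq_fun do rewrite mulr0 addr0.
  by move=> ->; apply/funext => x; rewrite mulN1r addNr.
have := B_lin a _ _ cf c0; under eq_fun do rewrite addr0.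
by move=> ->; rewrite B0; under eq_fun do rewrite addr0.
Qed.

Lemma positive_operator_cst (c : R) :
  B (fun _ => c) = (fun x => c * B (fun _ => 1) x).
Proof.
rewrite -positive_operatorZ; last exact: cst_continuous.
by congr B; apply/funext => x; rewrite mulr1.
Qed.

Lemma positive_operator_le f g : continuous f -> continuous g ->
  (forall x, f x <= g x) -> forall x, B f x <= B g x.
Proof.
case: B_pos => _ B_lin B_ge0 cf cg fg x.
have -> : g = (fun x => 1 * (fun y => -1 * f y + g y) x + f x).
  by apply/funext => y; ring.
rewrite B_lin //; last exact: continuous_scaleD.
rewrite mul1r lerDr; apply: B_ge0 => [|y]; first exact: continuous_scaleD.
by rewrite mulN1r addrC subr_ge0.
Qed.

End properties.

Lemma positive_operator_iter B n : positive_operator B -> positive_operator (iter n B).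
Proof.
move=> B_pos; elim: n => [|n [cI I_lin I_ge0]]; first by split.
case: B_pos => cB B_lin B_ge0; split => /=.
- by move=> f cf; apply/cB/cI.
- by move=> a f g cf cg; rewrite I_lin // B_lin //; exact: cI.
- by move=> f cf f_ge0 x; apply: B_ge0; [exact: cI|exact: I_ge0].
Qed.

Lemma positive_operator_iter_bound B (K M : R) n h :
  positive_operator B -> (forall x, B (fun _ => 1) x <= K) ->
  continuous h -> (forall x, 0 <= h x <= M) ->
  forall x, 0 <= iter n B h x <= M * K ^+ n.
Proof.
move=> B_pos B1_le ch h_bnd.
elim: n => [|n IH] x /=; first by rewrite expr0 mulr1.
have [cI _ _] := positive_operator_iter n B_pos.
have cIh := cI _ ch.
have [_ _ B_ge0] := B_pos.
have IH_ge0 y : 0 <= iter n B h y by case/andP: (IH y).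
have IH_le y : iter n B h y <= M * K ^+ n by case/andP: (IH y).
rewrite B_ge0 //=.
apply: le_trans (positive_operator_le B_pos cIh (@cst_continuous _ _ _) IH_le x) _.
by rewrite positive_operator_cst // exprSr mulrA ler_wpM2l // (le_trans (IH_ge0 x)).
Qed.

Lemma sup_norm_void f : ~ (exists x : X, True) -> sup_norm f = 0.
Proof.
move=> X0; rewrite /sup_norm; suff -> : range (fun x => `|f x|) = set0 by rewrite sup0.
by apply/seteqP; split => // y [x _ _]; apply: X0; exists x.
Qed.

Lemma sup_norm_le f (M : R) : 0 <= M -> (forall x, `|f x| <= M) -> sup_norm f <= M.
Proof.
move=> M_ge0 f_le; have [[x0 _]|X0] := pselect (exists x : X, True).
  by apply: ge_sup => [|_ [x _ <-]]; [exists `|f x0|, x0|exact: f_le].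
by rewrite sup_norm_void.
Qed.

Lemma le_sup_norm f (M : R) x : (forall y, `|f y| <= M) -> `|f x| <= sup_norm f.
Proof. by move=> f_le; apply: ub_le_sup; [exists M => _ [y _ <-]|exists x]. Qed.

Lemma sup_norm_ge0 f (M : R) : (forall y, `|f y| <= M) -> 0 <= sup_norm f.
Proof.
move=> f_le; have [[x0 _]|X0] := pselect (exists x : X, True).
  exact: le_trans (normr_ge0 (f x0)) (le_sup_norm x0 f_le).
by rewrite sup_norm_void.
Qed.

Lemma log_rate_iter_le B (E Q : R) : positive_operator B -> 0 < E -> 0 < Q ->
  (forall n x, 0 <= iter n B (fun _ => 1) x <= E * Q ^+ n) ->
  (lim (log_rate (fun n => sup_norm (iter n B (fun _ => 1%R))) n @[n --> \oo])
     <= (ln Q)%:E)%E.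
Proof.
move=> B_pos E_gt0 Q_gt0 iter_bnd.
set a := fun n => sup_norm (iter n B (fun _ => 1)).
have c1 : continuous (fun _ : X => 1 : R) by exact: cst_continuous.
have norm_le n y : `|iter n B (fun _ => 1) y| <= E * Q ^+ n.
  by case/andP: (iter_bnd n y) => ge0 le_EQ; rewrite ger0_norm.
have a_ge0 n : 0 <= a n by exact: sup_norm_ge0 (norm_le n).
have iter_le_a n y : iter n B (fun _ => 1) y <= a n.
  by case/andP: (iter_bnd n y) => ge0 _; rewrite -(ger0_norm ge0) (le_sup_norm _ (norm_le n)).
have a_submul n k : a (n + k)%N <= a n * a k.
  apply: sup_norm_le => [|x]; first exact: mulr_ge0.
  have In_pos := positive_operator_iter n B_pos.
  have [cIk _ _] := positive_operator_iter k B_pos.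
  have [_ _ In_ge0] := In_pos.
  rewrite iterD ger0_norm; last first.
    by apply: In_ge0 => [|y]; [exact: cIk|case/andP: (iter_bnd k y)].
  have := positive_operator_le In_pos (cIk _ c1) (@cst_continuous _ _ _) (iter_le_a k) x.
  move/le_trans; apply.
  by rewrite positive_operator_cst // mulrC ler_wpM2r.
apply: (log_rate_lim_le (E := E)) => // [|n]; first exact: submultiplicative_log_rate_cvg.
by rewrite a_ge0 sup_norm_le ?mulr_ge0 ?exprn_ge0 ?ltW.
Qed.

End positive_operator.

Lemma compact_continuous_bounded (R : realType) (X : topologicalType) (f : X -> R) :
  compact [set: X] -> continuous f -> exists M, forall x, `|f x| <= M.
Proof.
move=> cX cf; have f_within : {within [set: X], continuous f} by exact: continuous_subspaceT.
have [M [_ M_bnd]] := compact_bounded (continuous_compact f_within cX).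
by exists (`|M| + 1) => x; apply: M_bnd; [rewrite (le_lt_trans (ler_norm _)) ?ltrDl|exists x].
Qed.

Section transfer_operator.
Variables (R : realType) (X : topologicalType) (alpha : X -> X).
Variable A : (X -> R) -> (X -> R).
Hypothesis A_transfer : transfer_operator alpha A.

(* [Aphi_iter A phi n] is [iter n (weighted phi) (fun _ => 1)], and [lam A phi]
   is [lim (log_rate (fun n => sup_norm (Aphi_iter A phi n)) n @[n --> \oo])],
   both by conversion. *)
Definition weighted (phi : X -> R) (f : X -> R) := A (fun x => expR (phi x) * f x).

Lemma transfer_positive_operator : positive_operator A.
Proof. by case: A_transfer => [[cA A_lin] [A_ge0 _]]; split. Qed.

Lemma weighted_positive_operator phi : continuous phi -> positive_operator (weighted phi).
Proof.
have [cA A_lin A_ge0] := transfer_positive_operator.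
move=> cphi; have cexp := continuous_expR_comp cphi; split.
- by move=> f cf; apply/cA/continuous_mul.
- move=> a f g cf cg; rewrite /weighted -A_lin; try exact: continuous_mul.
  by congr A; apply/funext => x; rewrite mulrDr mulrCA.
- move=> f cf f_ge0 x; apply: A_ge0 => [|y]; first exact: continuous_mul.
  by rewrite mulr_ge0 ?expR_ge0.
Qed.

Lemma transfer_one_bounded : compact [set: X] ->
  exists2 K : R, 0 < K & forall x, A (fun _ => 1) x <= K.
Proof.
have [cA _ _] := transfer_positive_operator.
move=> cX; have cA1 := cA _ (@cst_continuous _ _ (1 : R)).
have [M M_bnd] := compact_continuous_bounded cX cA1.
exists (`|M| + 1) => [|x]; first by rewrite ltr_wpDl.
by rewrite (le_trans (ler_norm _)) // (le_trans (M_bnd x)) // (le_trans (ler_norm _)) ?lerDl.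
Qed.

Lemma lam_le_ub phi (m K : R) : continuous phi -> (forall x, phi x <= m) ->
  0 < K -> (forall x, A (fun _ => 1) x <= K) -> (lam A phi <= (m + ln K)%:E)%E.
Proof.
move=> cphi phi_le K_gt0 A1_le.
have W_pos := weighted_positive_operator cphi.
have Q_gt0 : 0 < expR m * K by rewrite mulr_gt0 ?expR_gt0.
rewrite -[m in (m + _)]expRK -lnM ?posrE ?expR_gt0 //.
apply: (log_rate_iter_le W_pos ltr01 Q_gt0) => n x; rewrite mul1r.
have W1_le y : weighted phi (fun _ => 1) y <= expR m * K.
  have A_pos := transfer_positive_operator.
  have cW : continuous (fun x => expR (phi x) * 1).
    by apply: continuous_mul; [exact: continuous_expR_comp|exact: cst_continuous].
  apply: le_trans (positive_operator_le A_pos cW (@cst_continuous _ _ (expR m)) _ y) _.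
    by move=> z; rewrite mulr1 ler_expR.
  by rewrite positive_operator_cst // ler_wpM2l ?expR_ge0.
have := positive_operator_iter_bound (M := 1) n W_pos W1_le
  (@cst_continuous _ _ (1 : R)).
by rewrite mul1r; apply => y; rewrite ler01 lexx.
Qed.

Lemma Aphi_iter_coboundary g n : continuous g ->
  Aphi_iter A (fun x => g (alpha x) - g x) n =
  (fun x => expR (g x) * iter n A (fun y => expR (- g y)) x).
Proof.
move=> cg; have [_ [_ A_mul]] := A_transfer.
have cI k : continuous (iter k A (fun y => expR (- g y))).
  have [cI _ _] := positive_operator_iter k transfer_positive_operator.
  by apply/cI/continuous_expR_comp => x; apply: continuousN; exact: cg.
elim: n => [|n IH]; first by apply/funext => x /=; rewrite -expRD subrr expR0.
rewrite /Aphi_iter iterS -/(Aphi_iter _ _ n) IH /=.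
rewrite -(A_mul (fun x => expR (g x)) _ (continuous_expR_comp cg) (cI n)).
by congr A; apply/funext => x; rewrite mulrA -expRD subrK.
Qed.

Lemma lam_coboundary_le g (K : R) : compact [set: X] -> continuous alpha ->
  continuous g -> 0 < K -> (forall x, A (fun _ => 1) x <= K) ->
  (lam A (fun x => (g (alpha x) - g x)%R) <= (ln K)%:E)%E.
Proof.
move=> cX calpha cg K_gt0 A1_le.
have [G g_le] := compact_continuous_bounded cX cg.
have cpsi : continuous (fun x => g (alpha x) - g x).
  move=> x; apply: (@continuousB _ _ _ (g \o alpha) g); last exact: cg.
  by apply: continuous_comp; [exact: calpha|exact: cg].
have cexp : continuous (fun y => expR (- g y)).
  by apply: continuous_expR_comp => x; apply: continuousN; exact: cg.
have exp_bnd y : 0 <= expR (- g y) <= expR G.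
  by rewrite expR_ge0 ler_expR (le_trans _ (g_le y)) // -normrN ler_norm.
apply: (log_rate_iter_le (weighted_positive_operator cpsi) (expR_gt0 (G + G)) K_gt0) => n x.
rewrite -/(Aphi_iter A _ n) Aphi_iter_coboundary // expRD -mulrA.
have /andP[I_ge0 I_le] :=
  positive_operator_iter_bound n transfer_positive_operator A1_le cexp exp_bnd x.
rewrite mulr_ge0 ?expR_ge0 //= ler_pM ?expR_ge0 // ler_expR.
exact: le_trans (ler_norm _) (g_le x).
Qed.

End transfer_operator.

Section linear_functional.
Variables (R : realType) (X : topologicalType) (mu : (X -> R) -> R).
Hypothesis mu_lin : lin_functional mu.

Lemma lin_functionalZ (a : R) (f : X -> R) :
  continuous f -> mu (fun x => a * f x) = a * mu f.
Proof.
have c0 : continuous (fun _ : X => 0 : R) by exact: cst_continuous.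
have mu0 : mu (fun _ => 0) = 0.
  have := mu_lin (-1) c0 c0; under eq_fun do rewrite mulr0 addr0.
  by rewrite mulN1r addNr.
move=> cf; have := mu_lin a cf c0; under eq_fun do rewrite addr0.
by rewrite mu0 addr0.
Qed.

Lemma lin_functionalB (f g : X -> R) : continuous f -> continuous g ->
  mu (fun x => f x - g x) = mu f - mu g.
Proof.
move=> cf cg; rewrite addrC -mulN1r -mu_lin //.
by congr mu; apply/funext => x; rewrite mulN1r addrC.
Qed.

End linear_functional.

Definition gap_unbounded (R : realType) (X : topologicalType)
    (A : (X -> R) -> (X -> R)) (mu : (X -> R) -> R) :=
  forall M : R, exists2 phi : X -> R, continuous phi & (lam A phi - (mu phi)%:E <= M%:E)%E.

Section gap_unbounded.
Variables (R : realType) (X : topologicalType) (alpha : X -> X).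
Variables (A : (X -> R) -> (X -> R)) (mu : (X -> R) -> R) (K : R).
Hypotheses (cX : compact [set: X]) (calpha : continuous alpha).
Hypotheses (A_transfer : transfer_operator alpha A) (mu_lin : lin_functional mu).
Hypotheses (K_gt0 : 0 < K) (A1_le : forall x, A (fun _ => 1) x <= K).

Lemma gap_le phi (c M : R) :
  (lam A phi <= c%:E)%E -> c - mu phi <= M -> (lam A phi - (mu phi)%:E <= M%:E)%E.
Proof. by move=> lam_le c_le; rewrite (le_trans (leeB lam_le (lexx _))) // lee_fin. Qed.

Lemma gap_unbounded_of_not_positive :
  ~ (forall f : X -> R, continuous f -> (forall x, 0 <= f x) -> 0 <= mu f) ->
  gap_unbounded A mu.
Proof.
move=> /existsNP[f /not_implyP[cf /not_implyP[f_ge0 /negP]]]; rewrite -ltNge => muf_lt0 M.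
set s := `|ln K - M| / mu f.
have s_le0 : s <= 0 by rewrite /s mulr_ge0_le0 // invr_le0 ltW.
have cphi : continuous (fun x => s * f x).
  by apply: continuous_mul => //; exact: cst_continuous.
exists (fun x => s * f x) => //.
apply: (@gap_le _ (0 + ln K)).
  apply: (lam_le_ub A_transfer cphi _ K_gt0 A1_le) => x.
  by rewrite mulr_le0_ge0.
rewrite lin_functionalZ // /s divfK ?lt_eqF //.
have := ler_norm (ln K - M); lra.
Qed.

Lemma gap_unbounded_of_mass_neq1 : mu (fun _ => 1) <> 1 -> gap_unbounded A mu.
Proof.
move=> mu1_neq1 M; set c := (M - ln K) / (1 - mu (fun _ => 1)).
have mu1_neq : 1 - mu (fun _ => 1) != 0 by rewrite subr_eq0 eq_sym; apply/eqP.
exists (fun _ => c); first exact: cst_continuous.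
apply: (@gap_le _ (c + ln K)).
  by apply: (lam_le_ub A_transfer (@cst_continuous _ _ c) _ K_gt0 A1_le) => x.
have -> : mu (fun _ => c) = c * mu (fun _ => 1).
  rewrite -lin_functionalZ //; last exact: cst_continuous.
  by congr mu; apply/funext => x; rewrite mulr1.
have : c * (1 - mu (fun _ => 1)) = M - ln K by rewrite /c divfK.
lra.
Qed.

Lemma gap_unbounded_of_not_invariant :
  ~ (forall f : X -> R, continuous f -> mu (fun x => f (alpha x)) = mu f) ->
  gap_unbounded A mu.
Proof.
move=> /existsNP[f /not_implyP[cf /eqP mu_neq]] M.
set d := mu (fun x => f (alpha x)) - mu f.
have d_neq0 : d != 0 by rewrite subr_eq0.
set t := (ln K - M) / d.
have cfa : continuous (fun x => f (alpha x)).
  by move=> x; apply: continuous_comp; [exact: calpha|exact: cf].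
have ctf : continuous (fun x => t * f x).
  by apply: continuous_mul => //; exact: cst_continuous.
have ctfa : continuous (fun x => t * f (alpha x)).
  by apply: continuous_mul => //; exact: cst_continuous.
exists (fun x => t * f (alpha x) - t * f x).
  by move=> x; apply: (@continuousB _ _ _ (fun x => t * f (alpha x)) (fun x => t * f x));
    [exact: ctfa|exact: ctf].
apply: (@gap_le _ (ln K)).
  exact: (lam_coboundary_le A_transfer cX calpha ctf K_gt0 A1_le).
rewrite lin_functionalB // !lin_functionalZ // -mulrBr /t divfK //.
lra.
Qed.

Lemma gap_unbounded_of_not_in_M_delta : ~ in_M_delta alpha mu -> gap_unbounded A mu.
Proof.
move=> not_in_M.
have [pos|] := pselect (forall f : X -> R, continuous f -> (forall x, 0 <= f x) -> 0 <= mu f);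
  last exact: gap_unbounded_of_not_positive.
have [mass1|] := pselect (mu (fun _ => 1) = 1); last exact: gap_unbounded_of_mass_neq1.
have [inv|] := pselect (forall f : X -> R, continuous f -> mu (fun x => f (alpha x)) = mu f);
  last exact: gap_unbounded_of_not_invariant.
by case: not_in_M; split.
Qed.

End gap_unbounded.

Lemma ereal_inf_unbounded (R : realType) (S : set (\bar R)) :
  (forall M : R, exists2 y, S y & (y <= M%:E)%E) -> ereal_inf S = -oo%E.
Proof.
move=> S_unb; have inf_le M : (ereal_inf S <= M%:E)%E.
  by have [y Sy y_le] := S_unb M; exact: le_trans (ereal_inf_lbound Sy) y_le.
case: (ereal_inf S) inf_le => [r| |] inf_le //; last by have := inf_le 0.
by have := inf_le (r - 1); rewrite lee_fin => r_le; exfalso; lra.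
Qed.

Theorem theorem1p10 (R : realType) (X : topologicalType)
  (hX : hausdorff_space X) (cX : compact [set: X])
  (alpha : X -> X) (calpha : continuous alpha)
  (A : (X -> R) -> (X -> R)) (hA : transfer_operator alpha A)
  (mu : (X -> R) -> R) (hmu : lin_functional mu) (hnot : ~ in_M_delta alpha mu) :
  ereal_inf [set (lam A phi - (mu phi)%:E)%E | phi in [set phi : X -> R | continuous phi]]
    = -oo%E.
Proof.
have [K K_gt0 A1_le] := transfer_one_bounded hA cX.
have gap_unb := gap_unbounded_of_not_in_M_delta cX calpha hA hmu K_gt0 A1_le hnot.
apply: ereal_inf_unbounded => M; have [phi cphi phi_gap_le] := gap_unb M.
by exists (lam A phi - (mu phi)%:E)%E => //; exists phi.
Qed.
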